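(* Let $\mathfrak g$ be a finite-dimensional real Lie algebra having an ideal of codimension one isomorphic to the Heisenberg Lie algebra $\mathfrak H_{2m+1}$ (for some $m\ge1$). Then: (a) if $\mathfrak g$ is not unimodular, then no inner product on $\mathfrak g$ has a geodesic basis; (b) if $\mathfrak g$ is unimodular, then every inner product on $\mathfrak g$ has an orthonormal geodesic basis.
   Context: For an inner product $\langle\cdot,\cdot\rangle$ on a real Lie algebra $\mathfrak g$, a nonzero $X\in\mathfrak g$ is a geodesic element if $\langle X,[X,Y]\rangle=0$ for all $Y\in\mathfrak g$; a geodesic basis is a basis consisting of geodesic elements. A Lie algebra is unimodular if $\operatorname{Tr}(\operatorname{ad}(X))=0$ for all $X$. The Heisenberg Lie algebra $\mathfrak H_{2m+1}$ has basis $\{X_1,\dots,X_{2m+1}\}$ with nonzero brackets $[X_i,X_{i+m}]=X_{2m+1}$ for $i=1,\dots,m$ (and all other brackets of basis elements zero, up to antisymmetry). *)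

(* A finite-dimensional real Lie algebra is modelled as
   'rV[R]_n (R : realType) with a bracket satisfying the Lie axioms. *)
From mathcomp Require Import all_boot all_order all_algebra.
From mathcomp Require Import reals.
Set Implicit Arguments. Unset Strict Implicit. Unset Printing Implicit Defensive.
Import Order.TTheory GRing.Theory Num.Theory.
Local Open Scope ring_scope.

Section Defs.
Variables (R : realType) (n : nat).
Notation V := 'rV[R]_n.

Definition is_lie_bracket (br : V -> V -> V) : Prop :=
  [/\ (forall (a : R) x y z, br (a *: x + y) z = a *: br x z + br y z),
      (forall (a : R) x y z, br z (a *: x + y) = a *: br z x + br z y),
      (forall x, br x x = 0) &
      (forall x y z, br x (br y z) + br y (br z x) + br z (br x y) = 0)].

Definition is_inner_product (ip : V -> V -> R) : Prop :=
  [/\ (forall (a : R) x y z, ip (a *: x + y) z = a * ip x z + ip y z),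
      (forall x y, ip x y = ip y x) &
      (forall x, x != 0 -> 0 < ip x x)].

Definition ad_mx (br : V -> V -> V) (X : V) : 'M[R]_n := lin1_mx (br X).
Definition unimodular (br : V -> V -> V) : Prop :=
  forall X : V, \tr (ad_mx br X) = 0.

Definition geodesic (br : V -> V -> V) (ip : V -> V -> R) (X : V) : Prop :=
  X != 0 /\ forall Y : V, ip X (br X Y) = 0.

(* a basis of g, given as the rows of a square matrix B *)
Definition geodesic_basis (br : V -> V -> V) (ip : V -> V -> R) (B : 'M[R]_n) : Prop :=
  row_free B /\ forall i, geodesic br ip (row i B).

Definition orthonormal_rows (ip : V -> V -> R) (B : 'M[R]_n) : Prop :=
  forall i j, ip (row i B) (row j B) = (i == j)%:R.
End Defs.

(* structure constants of the Heisenberg algebra H_{2m+1}, 0-indexed basis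
   X_0..X_{2m}: [X_i, X_{i+m}] = X_{2m} for i < m, others zero *)
Definition heis_coef (R : realType) (m : nat) (i j : nat) : R :=
  if (i < m)%N && (j == i + m)%N then 1
  else if (j < m)%N && (i == j + m)%N then -1 else 0.

(* the rows of X span an ideal of codimension one of (R^n, br) and form a
   basis of it in which the brackets are those of H_{2m+1} *)
Definition heisenberg_codim1_ideal (R : realType) (n m : nat)
    (br : 'rV[R]_n -> 'rV[R]_n -> 'rV[R]_n) (X : 'M[R]_(m.*2.+1, n)) : Prop :=
  [/\ row_free X,
      (\rank X).+1 = n,
      (forall (Y v : 'rV[R]_n), (v <= X)%MS -> (br Y v <= X)%MS) &
      (forall i j : 'I_(m.*2.+1),
          br (row i X) (row j X) = heis_coef R m i j *: row ord_max X)].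

(* The last basis vector [z] of the Heisenberg ideal [h] spans its centre, which is
   therefore stable under every [ad Y]: [br Y z = zeta Y *: z].  Writing
   [z = br X_i X_(i+m)], the Jacobi identity shows that the diagonal entries of [ad Y]
   at [X_i] and [X_(i+m)] add up to [zeta Y]; as [ad Y] maps everything into [h],
   [tr (ad Y) = (m + 1) zeta Y], so [g] is unimodular iff [zeta = 0].

   If [zeta Y0 <> 0], every geodesic [w] is orthogonal to [z]: off [h = ker zeta]
   because [<w, [w, z]> = zeta w <w, z>], in [h] by bracketing [w] with the partner of
   an [X_i] on which it has a nonzero coordinate, and no multiple of [z] is geodesic.
   So a geodesic basis would be orthogonal to [z].

   If [zeta = 0], [z] is central.  Take a unit [e] orthogonal to [h], the unit vector
   along [z] and an orthonormal basis of [h] orthogonal to [z].  On the latter the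
   quadratic form [v |-> <v, [v, e]>] has trace [- tr (ad e) = 0], so plane rotations
   make its diagonal vanish; the resulting orthonormal basis is geodesic. *)

From HB Require Import structures.
From mathcomp Require Import all_boot all_order all_algebra.
From mathcomp Require Import reals.
From mathcomp Require Import zify ring lra.
From Stdlib Require Import Classical_Prop.
Set Implicit Arguments. Unset Strict Implicit. Unset Printing Implicit Defensive.
Import Order.TTheory GRing.Theory Num.Theory.
Local Open Scope ring_scope.

Lemma mxtrace_lin1_basis (R : comUnitRingType) n (f : {linear 'rV[R]_n -> 'rV[R]_n})
    (P : 'M[R]_n) : P \in unitmx ->
  \tr (lin1_mx f) = \sum_i (f (row i P) *m invmx P) 0 i.
Proof.
move=> uP; rewrite -[lin1_mx f](mulKmx uP) mxtrace_mulC.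
by apply: eq_bigr => i _; rewrite -mul_rV_lin1 -!row_mul [RHS]mxE.
Qed.

Section InnerProduct.
Variables (R : realType) (n : nat) (ip : 'rV[R]_n -> 'rV[R]_n -> R).
Hypothesis hip : is_inner_product ip.
Local Notation V := 'rV[R]_n.

Definition ipl (y : V) : {scalar V} :=
  HB.pack (ip^~ y) (GRing.isLinear.Build _ _ _ _ (ip^~ y)
    (let: And3 lin _ _ := hip in fun a u v => lin a u v y)).

Lemma ipC x y : ip x y = ip y x. Proof. by case: hip. Qed.
Lemma ipDl x x' y : ip (x + x') y = ip x y + ip x' y. Proof. exact: (raddfD (ipl y)). Qed.
Lemma ipZl a x y : ip (a *: x) y = a * ip x y. Proof. exact: (scalarZ (ipl y)). Qed.
Lemma ip0l y : ip 0 y = 0. Proof. exact: (raddf0 (ipl y)). Qed.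
Lemma ip_suml I (r : seq I) (P : pred I) (F : I -> V) y :
  ip (\sum_(i <- r | P i) F i) y = \sum_(i <- r | P i) ip (F i) y.
Proof. exact: (raddf_sum (ipl y)). Qed.
Lemma ipDr x y y' : ip x (y + y') = ip x y + ip x y'.
Proof. by rewrite ![ip x _]ipC ipDl. Qed.
Lemma ipZr a x y : ip x (a *: y) = a * ip x y.
Proof. by rewrite ![ip x _]ipC ipZl. Qed.
Lemma ipNr x y : ip x (- y) = - ip x y. Proof. by rewrite -scaleN1r ipZr mulN1r. Qed.
Lemma ip0r x : ip x 0 = 0. Proof. by rewrite ipC ip0l. Qed.
Lemma ip_sumr I (r : seq I) (P : pred I) (F : I -> V) x :
  ip x (\sum_(i <- r | P i) F i) = \sum_(i <- r | P i) ip x (F i).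
Proof. by rewrite ipC ip_suml; apply: eq_bigr => i _; rewrite ipC. Qed.

Lemma ip_gt0 x : x != 0 -> 0 < ip x x. Proof. by case: hip => _ _; apply. Qed.
Lemma ip_ge0 x : 0 <= ip x x.
Proof. by have [->|/ip_gt0/ltW //] := eqVneq x 0; rewrite ip0l. Qed.

Definition normalize (v : V) := (Num.sqrt (ip v v))^-1 *: v.

Lemma ip_normalize v : v != 0 -> ip (normalize v) (normalize v) = 1.
Proof.
move=> v0; rewrite ipZl ipZr mulrA -expr2 exprVn sqr_sqrtr ?ip_ge0 //.
by rewrite mulVf // gt_eqF // ip_gt0.
Qed.

Definition orthonormal d (g : 'I_d -> V) := forall i j, ip (g i) (g j) = (i == j)%:R.

Definition cons_fam d (v : V) (g : 'I_d -> V) (k : 'I_d.+1) : V :=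
  if unlift ord0 k is Some k' then g k' else v.

Lemma cons_fam0 d v (g : 'I_d -> V) : cons_fam v g ord0 = v.
Proof. by rewrite /cons_fam unlift_none. Qed.
Lemma cons_famS d v (g : 'I_d -> V) k : cons_fam v g (lift ord0 k) = g k.
Proof. by rewrite /cons_fam liftK. Qed.

Lemma orthonormal_cons d v (g : 'I_d -> V) :
  ip v v = 1 -> (forall k, ip v (g k) = 0) -> orthonormal g ->
  orthonormal (cons_fam v g).
Proof.
move=> vv vg og i j; rewrite /cons_fam.
case: unliftP => [i' ->|->]; case: unliftP => [j' ->|->].
- by rewrite og (inj_eq lift_inj).
- by rewrite ipC vg eq_sym (negbTE (neq_lift _ _)).
- by rewrite vg (negbTE (neq_lift _ _)).
- by rewrite vv eqxx.
Qed.

Lemma orthonormal_rows_coord (B : 'M_n) : orthonormal_rows ip B ->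
  B \in unitmx /\ forall v k, (v *m invmx B) 0 k = ip v (row k B).
Proof.
move=> oB; pose C := \matrix_(i, j) ip ('e_i) (row j B).
have BC : B *m C = 1%:M.
  apply/matrixP => i j; rewrite !mxE -oB {1}(row_sum_delta (row i B)) ip_suml.
  by apply: eq_bigr => k _; rewrite ipZl !mxE.
have [uB _] := mulmx1_unit BC; split => // v k.
have -> : invmx B = C by rewrite -[C]mul1mx -(mulVmx uB) -mulmxA BC mulmx1.
rewrite !mxE {2}(row_sum_delta v) ip_suml; apply: eq_bigr => i _.
by rewrite ipZl mxE.
Qed.

Lemma orthonormal_rows_fam (g : 'I_n -> V) :
  orthonormal g -> orthonormal_rows ip (\matrix_i g i).
Proof. by move=> og i j; rewrite !rowK. Qed.

Lemma orthonormal_geodesic_basis (br : V -> V -> V) (g : 'I_n -> V) :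
  orthonormal g -> (forall i Y, ip (g i) (br (g i) Y) = 0) ->
  geodesic_basis br ip (\matrix_i g i) /\ orthonormal_rows ip (\matrix_i g i).
Proof.
move=> og geo; have oB := orthonormal_rows_fam og; split => //; split.
  by rewrite row_free_unit; case: (orthonormal_rows_coord oB).
move=> i; rewrite rowK; split; last exact: geo.
by apply/eqP => g0; have /eqP := og i i; rewrite g0 ip0l eqxx eq_sym oner_eq0.
Qed.

Lemma mxtrace_lin1_orthonormal (B : 'M_n) (f : {linear V -> V}) :
  orthonormal_rows ip B -> \tr (lin1_mx f) = \sum_i ip (f (row i B)) (row i B).
Proof.
case/orthonormal_rows_coord => uB coord.
by rewrite (mxtrace_lin1_basis _ uB); apply: eq_bigr => i _; rewrite coord.
Qed.

Definition ip_rows k (A : 'M[R]_(k, n)) (v : V) : 'rV[R]_k := \row_j ip v (row j A).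

Fact ip_rows_is_linear k (A : 'M[R]_(k, n)) : linear (ip_rows A).
Proof. by move=> a x y; apply/rowP => j; rewrite !mxE ipDl ipZl. Qed.

Definition ip_rows_lin k (A : 'M[R]_(k, n)) : {linear V -> 'rV[R]_k} :=
  HB.pack (ip_rows A) (GRing.isLinear.Build _ _ _ _ _ (ip_rows_is_linear A)).

Definition orthmx k (A : 'M[R]_(k, n)) := kermx (lin1_mx (ip_rows A)).

Lemma orthmx_ip k (A : 'M_(k, n)) v w : (v <= orthmx A)%MS -> (w <= A)%MS -> ip v w = 0.
Proof.
rewrite sub_kermx -[lin1_mx _]/(lin1_mx (ip_rows_lin A)) mul_rV_lin1.
move=> /eqP vA /submxP[D ->].
rewrite mulmx_sum_row ip_sumr big1 // => j _; rewrite ipZr.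
by have := congr1 (fun w : 'rV[R]_k => w 0 j) vA; rewrite !mxE => ->; rewrite mulr0.
Qed.

Lemma mxrank_cap_orthmx p k (T : 'M_(p, n)) (A : 'M_(k, n)) :
  (\rank T - k <= \rank (T :&: orthmx A))%N.
Proof.
have := mxrank_sum_cap T (orthmx A); have := rank_leq_col (T + orthmx A)%MS.
by rewrite /orthmx mxrank_ker; have := rank_leq_col (lin1_mx (ip_rows A)); lia.
Qed.

Lemma orthonormal_exists d : forall p (T : 'M_(p, n)), (d <= \rank T)%N ->
  exists g : 'I_d -> V, (forall i, (g i <= T)%MS) /\ orthonormal g.
Proof.
elim: d => [|d IH] p T rT; first by exists (fun _ => 0); split; case.
have [i Ti0] : exists i, row i T != 0.
  have : T != 0 by rewrite -mxrank_eq0; lia.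
  case/matrix0Pn => i [j Tij]; exists i.
  by apply: contraNneq Tij => /(congr1 (fun w : V => w 0 j)); rewrite !mxE => ->.
set u := normalize (row i T).
have rT' : (d <= \rank (T :&: orthmx u))%N by apply: leq_trans (mxrank_cap_orthmx T u); lia.
have [g [gT og]] := IH _ _ rT'.
have ug k : ip u (g k) = 0.
  by rewrite ipC (orthmx_ip (submx_trans (gT k) (capmxSr _ _))).
exists (cons_fam u g); split; last exact: orthonormal_cons (ip_normalize Ti0) ug og.
move=> k; rewrite /cons_fam; case: unliftP => [k' _|_].
  exact: submx_trans (gT k') (capmxSl _ _).
by rewrite scalemx_sub ?row_sub.
Qed.

Section ZeroDiagonal.
Variable L : {linear V -> V}.
Let q v := ip v (L v).

Lemma quad_comb x y a b : q (a *: x + b *: y) =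
  a ^+ 2 * q x + a * b * (ip x (L y) + ip y (L x)) + b ^+ 2 * q y.
Proof. by rewrite /q linearD !linearZ /= !ipDl !ipDr !ipZl !ipZr; ring. Qed.

Lemma quad_rotate_sum x y a b : a ^+ 2 + b ^+ 2 = 1 ->
  q (a *: x + b *: y) + q ((- b) *: x + a *: y) = q x + q y.
Proof.
move=> ab; rewrite !quad_comb.
transitivity ((a ^+ 2 + b ^+ 2) * (q x + q y)); first by ring.
by rewrite ab mul1r.
Qed.

Lemma quad_isotropic_rotation x y : q x * q y < 0 ->
  exists a b, a ^+ 2 + b ^+ 2 = 1 /\ q (a *: x + b *: y) = 0.
Proof.
set qx := q x; set qy := q y; set s := ip x (L y) + ip y (L x) => qxy.
have qy0 : qy != 0 by apply: contraTneq qxy => ->; rewrite mulr0 ltxx.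
have D0 : 0 <= s ^+ 2 - 4 * qx * qy by have := sqr_ge0 s; lra.
(* [t] is a root of [qy t^2 + s t + qx], so [x + t y] is isotropic *)
set r := Num.sqrt (s ^+ 2 - 4 * qx * qy); set t := (r - s) / (2 * qy).
have qt : qx + t * s + t ^+ 2 * qy = 0.
  have qyt : 2 * qy * t = r - s by rewrite /t mulrC divfK ?mulf_neq0 ?pnatr_eq0.
  apply: (mulfI (mulf_neq0 (_ : 4 != 0 :> R) qy0)); first by rewrite pnatr_eq0.
  have -> : 4 * qy * (qx + t * s + t ^+ 2 * qy) =
    4 * qx * qy + 2 * s * (2 * qy * t) + (2 * qy * t) ^+ 2 by ring.
  by rewrite qyt sqrrB sqr_sqrtr //; ring.
have t2 : 0 < 1 + t ^+ 2 by have := sqr_ge0 t; lra.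
set c := (Num.sqrt (1 + t ^+ 2))^-1.
have c2 : c ^+ 2 * (1 + t ^+ 2) = 1.
  by rewrite exprVn sqr_sqrtr ?ltW // mulVf // gt_eqF.
exists c, (c * t); split; first by rewrite -c2; ring.
by rewrite quad_comb -/qx -/qy -/s; transitivity (c ^+ 2 * (qx + t * s + t ^+ 2 * qy));
  [ring | rewrite qt mulr0].
Qed.

Definition rotate d (g : 'I_d -> V) i j a b k :=
  if k == i then a *: g i + b *: g j
  else if k == j then (- b) *: g i + a *: g j else g k.

Lemma orthonormal_rotate d (g : 'I_d -> V) i j a b :
  orthonormal g -> i != j -> a ^+ 2 + b ^+ 2 = 1 -> orthonormal (rotate g i j a b).
Proof.
move=> og ij ab k l; rewrite /rotate.
have ji : j != i by rewrite eq_sym.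
case: (eqVneq k i) => [Ek|ki]; [|case: (eqVneq k j) => [Ek|kj]];
  (case: (eqVneq l i) => [El|li]; [|case: (eqVneq l j) => [El|lj]]);
  rewrite ?Ek ?El ?eqxx ?(negbTE ij) ?(negbTE ji) ?(negbTE ki) ?(negbTE kj)
    ?(negbTE li) ?(negbTE lj) ?(ipDl, ipDr, ipZl, ipZr) !og;
  rewrite ?eqxx ?(negbTE ij) ?(negbTE ji) ?(negbTE ki) ?(negbTE kj)
    ?(negbTE li) ?(negbTE lj) ?[_ == k]eq_sym ?[_ == l]eq_sym
    ?(negbTE ki) ?(negbTE kj) ?(negbTE li) ?(negbTE lj) /= ?mulr1n ?mulr0n;
  nra.
Qed.

Lemma sum_rotate d (g : 'I_d -> V) i j a b : i != j -> a ^+ 2 + b ^+ 2 = 1 ->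
  \sum_k q (rotate g i j a b k) = \sum_k q (g k).
Proof.
move=> ij ab; have ji : j != i by rewrite eq_sym.
rewrite (bigD1 i) // (bigD1 j) //= [in RHS](bigD1 i) // [in RHS](bigD1 j) //= !addrA.
rewrite /rotate eqxx (negbTE ji) eqxx quad_rotate_sum //; congr (_ + _).
by apply: eq_bigr => k /andP [ki kj]; rewrite (negbTE ki) (negbTE kj).
Qed.

Lemma sum_eq0_opposite_sign d (F : 'I_d -> R) i :
  \sum_k F k = 0 -> F i != 0 -> exists j, F i * F j < 0.
Proof.
move=> F0 Fi; apply/existsP; apply: contraNT Fi => /existsPn Fij.
have Fge0 k : 0 <= F i * F k by rewrite leNgt Fij.
have : \sum_k F i * F k = 0 by rewrite -mulr_sumr F0 mulr0.
move/(psumr_eq0P (fun k _ => Fge0 k))/(_ i isT)/eqP.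
by rewrite mulf_eq0 orbb.
Qed.

(* each rotation kills one nonzero diagonal entry without creating a new one *)
Lemma orthonormal_zero_diagonal p (W : 'M_(p, n)) d (g : 'I_d -> V) :
  orthonormal g -> (forall i, (g i <= W)%MS) -> \sum_i q (g i) = 0 ->
  exists g' : 'I_d -> V,
    [/\ orthonormal g', forall i, (g' i <= W)%MS & forall i, q (g' i) = 0].
Proof.
have [N] := ubnP #|[pred i | q (g i) != 0]|.
elim: N g => [//|N IH] g cg og gW sg.
have [i qi|q0] := pickP [pred i | q (g i) != 0]; last first.
  by exists g; split => // i; apply/eqP/negbFE/q0.
have [j qij] := sum_eq0_opposite_sign sg qi.
have ij : i != j by apply: contraTneq qij => <-; rewrite -expr2 -leNgt sqr_ge0.
have [a [b [ab qa]]] := quad_isotropic_rotation qij.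
apply: (IH (rotate g i j a b)).
- rewrite -ltnS; apply: (leq_trans _ cg); rewrite ltnS; apply: proper_card; apply/properP; split.
    apply/subsetP => k; rewrite !inE /rotate.
    have [->|_] := eqVneq k i; first by rewrite qa eqxx.
    have [->|//] := eqVneq k j; move=> _; apply: contraTneq qij => ->.
    by rewrite mulr0 ltxx.
  by exists i => //; rewrite inE /rotate eqxx qa eqxx.
- exact: orthonormal_rotate.
- by move=> k; rewrite /rotate; do 2?case: ifP => _; rewrite ?addmx_sub ?scalemx_sub.
- by rewrite sum_rotate.
Qed.
End ZeroDiagonal.
End InnerProduct.

Section LieBracket.
Variables (R : realType) (n : nat) (br : 'rV[R]_n -> 'rV[R]_n -> 'rV[R]_n).
Hypothesis hbr : is_lie_bracket br.
Local Notation V := 'rV[R]_n.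

Definition ad (x : V) : {linear V -> V} :=
  HB.pack (br x) (GRing.isLinear.Build _ _ _ _ (br x)
    (let: And4 _ lin _ _ := hbr in fun a u v => lin a u v x)).
Definition adl (y : V) : {linear V -> V} :=
  HB.pack (br^~ y) (GRing.isLinear.Build _ _ _ _ (br^~ y)
    (let: And4 lin _ _ _ := hbr in fun a u v => lin a u v y)).

Lemma brDl x x' y : br (x + x') y = br x y + br x' y. Proof. exact: (raddfD (adl y)). Qed.
Lemma brDr x y y' : br x (y + y') = br x y + br x y'. Proof. exact: (raddfD (ad x)). Qed.
Lemma brZl a x y : br (a *: x) y = a *: br x y. Proof. exact: (linearZ_LR (adl y)). Qed.
Lemma brZr a x y : br x (a *: y) = a *: br x y. Proof. exact: (linearZ_LR (ad x)). Qed.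
Lemma br_suml I (r : seq I) (P : pred I) (F : I -> V) y :
  br (\sum_(i <- r | P i) F i) y = \sum_(i <- r | P i) br (F i) y.
Proof. exact: (raddf_sum (adl y)). Qed.
Lemma br_sumr I (r : seq I) (P : pred I) (F : I -> V) x :
  br x (\sum_(i <- r | P i) F i) = \sum_(i <- r | P i) br x (F i).
Proof. exact: (raddf_sum (ad x)). Qed.
Lemma brNr x y : br x (- y) = - br x y. Proof. exact: (raddfN (ad x)). Qed.
Lemma brxx x : br x x = 0. Proof. by case: hbr. Qed.

Lemma brC x y : br x y = - br y x.
Proof.
apply/eqP; rewrite -addr_eq0; apply/eqP.
by have := brxx (x + y); rewrite brDl !brDr !brxx add0r addr0.
Qed.

Lemma br_derivation x y w : br x (br y w) = br (br x y) w + br y (br x w).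
Proof.
have [_ _ _ jacobi] := hbr; have /eqP := jacobi x y w.
rewrite [br w (br x y)]brC [br w x]brC brNr -addrA addr_eq0 opprD !opprK => /eqP ->.
exact: addrC.
Qed.
End LieBracket.

Section HeisenbergIdeal.
Variables (R : realType) (m : nat).
Hypothesis m_gt0 : (0 < m)%N.
Local Notation N := m.*2.+1.
Local Notation V := 'rV[R]_m.*2.+2.
Variables (br : V -> V -> V) (X : 'M[R]_(N, m.*2.+2)).
Hypotheses (hbr : is_lie_bracket br) (hX : heisenberg_codim1_ideal br X).
Local Notation z := (row ord_max X).

Lemma X_row_free : row_free X. Proof. by case: hX. Qed.
Lemma X_ideal Y v : (v <= X)%MS -> (br Y v <= X)%MS.
Proof. by case: hX => _ _ ideal _; apply: ideal. Qed.
Lemma br_X_rows i j : br (row i X) (row j X) = heis_coef R m i j *: z.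
Proof. by case: hX. Qed.

Definition coords (v : V) : 'rV[R]_N := v *m pinvmx X.
Lemma coordsK u : coords (u *m X) = u.
Proof. by apply: (row_free_inj X_row_free); rewrite /coords mulmxKpV // submxMl. Qed.
Lemma coordsE v : (v <= X)%MS -> coords v *m X = v. Proof. exact: mulmxKpV. Qed.

Lemma center_neq0 : z != 0.
Proof.
apply/eqP => z0; suff /negP[] : ~~ row_free X by exact: X_row_free.
by apply/row_freePn; exists ord_max; rewrite z0 sub0mx.
Qed.

Lemma scalez_inj s1 s2 : s1 *: z = s2 *: z -> s1 = s2.
Proof.
move/eqP; rewrite -subr_eq0 -scalerBl scaler_eq0 (negbTE center_neq0) orbF subr_eq0.
by move/eqP.
Qed.

Lemma heis_coef_center (j : nat) : heis_coef R m j m.*2 = 0.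
Proof. rewrite /heis_coef; case: ifP => [/andP[]|_]; [lia|]; case: ifP => // /andP[]; lia. Qed.

Lemma heis_coef_shift (i j : nat) : (i < m)%N -> heis_coef R m j (i + m) = (j == i)%:R.
Proof.
move=> im; rewrite /heis_coef; have [->|ji] := eqVneq j i; first by rewrite im eqxx.
case: ifP => [/andP[_ /eqP]|_]; first lia.
case: ifP => // /andP[]; lia.
Qed.

Lemma heis_coef_unshift (i j : nat) : (i < m)%N -> heis_coef R m j i = - (j == i + m)%:R.
Proof.
move=> im; rewrite /heis_coef; have [->|ji] := eqVneq j (i + m).
  by case: ifP => [/andP[]|_]; [lia | rewrite im].
case: ifP => [/andP[_ /eqP]|_]; first lia.
by case: ifP => [/andP[_ /eqP]|_]; [lia | rewrite oppr0].
Qed.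

Lemma sum_coef_delta (u : 'rV[R]_N) (k : 'I_N) (k' : nat) : k' = k ->
  \sum_j u 0 j * ((j : nat) == k')%:R = u 0 k.
Proof.
move=> ->; rewrite (bigD1 k) //= eqxx mulr1 big1 ?addr0 // => j jk.
by rewrite (_ : ((j : nat) == k) = false) ?mulr0 //; apply/negbTE.
Qed.

Lemma sum_heis_coef_shift (u : 'rV[R]_N) (i i' : 'I_N) :
  (i < m)%N -> (i' : nat) = (i + m)%N -> \sum_j u 0 j * heis_coef R m j i' = u 0 i.
Proof.
move=> im ->; under eq_bigr => j _ do rewrite heis_coef_shift //.
exact: sum_coef_delta.
Qed.

Lemma sum_heis_coef_unshift (u : 'rV[R]_N) (i i' : 'I_N) :
  (i < m)%N -> (i' : nat) = (i + m)%N -> \sum_j u 0 j * heis_coef R m j i = - u 0 i'.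
Proof.
move=> im i'E; under eq_bigr => j _ do rewrite heis_coef_unshift // mulrN.
by rewrite sumrN (sum_coef_delta _ (esym i'E)).
Qed.

Lemma br_mul_row u k : br (u *m X) (row k X) = (\sum_j u 0 j * heis_coef R m j k) *: z.
Proof.
rewrite mulmx_sum_row (br_suml hbr) scaler_suml; apply: eq_bigr => j _.
by rewrite (brZl hbr) br_X_rows scalerA.
Qed.

Lemma br_ideal_center u v : exists s, br (u *m X) (v *m X) = s *: z.
Proof.
exists (\sum_k v 0 k * \sum_j u 0 j * heis_coef R m j k).
rewrite [v *m X]mulmx_sum_row (br_sumr hbr) scaler_suml; apply: eq_bigr => k _.
by rewrite (brZr hbr) br_mul_row scalerA.
Qed.

(* [ad_coords Y k] is the [k]-th row of the matrix of [ad Y] restricted to the ideal *)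
Definition ad_coords (Y : V) (k : 'I_N) := coords (br Y (row k X)).
Lemma ad_coordsE Y k : ad_coords Y k *m X = br Y (row k X).
Proof. by rewrite coordsE // X_ideal // row_sub. Qed.

Lemma br_center_pair Y (i i' : 'I_N) : (i < m)%N -> (i' : nat) = (i + m)%N ->
  br Y z = (ad_coords Y i 0 i + ad_coords Y i' 0 i') *: z.
Proof.
move=> im i'E.
rewrite {1}(_ : z = br (row i X) (row i' X)); last first.
  by rewrite br_X_rows i'E heis_coef_shift // eqxx scale1r.
rewrite (br_derivation hbr) -!(ad_coordsE Y) br_mul_row [br _ (_ *m X)](brC hbr) br_mul_row.
rewrite (sum_heis_coef_shift _ im i'E) (sum_heis_coef_unshift _ im i'E).
by rewrite scaleNr opprK scalerDl.
Qed.

(* the eigenvalue of [ad Y] on the centre [R z] of the ideal, see [br_center] *)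
Definition zeta (Y : V) := ad_coords Y ord_max 0 ord_max.

Lemma br_center Y : br Y z = zeta Y *: z.
Proof.
have m_lt : (m < N)%N by lia.
have := @br_center_pair Y ord0 (Ordinal m_lt) m_gt0 (erefl _).
set s := (_ + _) => Yz; rewrite Yz; congr (_ *: _).
rewrite /zeta /ad_coords Yz /coords -scalemxAl -/(coords z) rowE coordsK !mxE eqxx /=.
by rewrite eqxx mulr1.
Qed.

Lemma ad_coords_pair_diag Y (i i' : 'I_N) : (i < m)%N -> (i' : nat) = (i + m)%N ->
  ad_coords Y i 0 i + ad_coords Y i' 0 i' = zeta Y.
Proof. by move=> im i'E; apply: scalez_inj; rewrite -br_center_pair // br_center. Qed.

Lemma zeta_linear a x y : zeta (a *: x + y) = a * zeta x + zeta y.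
Proof.
apply: scalez_inj; rewrite -br_center (brDl hbr) (brZl hbr) !br_center.
by rewrite scalerDl scalerA.
Qed.

Lemma zeta_ideal u : zeta (u *m X) = 0.
Proof.
apply: scalez_inj; rewrite -br_center br_mul_row scale0r big1 ?scale0r // => j _.
by rewrite heis_coef_center mulr0.
Qed.

Lemma sum_ad_coords_diag Y : \sum_(k < N) ad_coords Y k 0 k = zeta Y *+ m.+1.
Proof.
pose G (k : nat) := ad_coords Y (inord k) 0 (inord k).
have -> : \sum_(k < N) ad_coords Y k 0 k = \sum_(k < N) G k.
  by apply: eq_bigr => k _; rewrite /G inord_val.
rewrite -(big_mkord xpredT) big_nat_recr //=.
have -> : G m.*2 = zeta Y.
  by rewrite /G /zeta (_ : inord m.*2 = ord_max :> 'I_N) //; apply/val_inj; rewrite /= inordK.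
rewrite -addnn (@big_cat_nat _ _ _ m) ?leq_addl //= -{2}[m]add0n big_addn addnK -big_split /=.
rewrite (eq_big_nat _ _ (F2 := fun _ => zeta Y)); last first.
  move=> k /andP [_ km].
  have k_lt : (k < N)%N by lia.
  have km_lt : (k + m < N)%N by lia.
  by rewrite -(@ad_coords_pair_diag Y (inord k) (inord (k + m))) ?inordK.
by rewrite sumr_const_nat subn0 mulrS addrC.
Qed.

Lemma X_rank : \rank X = N. Proof. exact/eqP/X_row_free. Qed.

Lemma exists_outside_ideal : exists e : V, ~~ (e <= X)%MS.
Proof.
have : ~~ (1%:M <= X)%MS.
  by apply/negP => /mxrankS; rewrite mxrank1 X_rank; lia.
by case/row_subPn => i; exists (row i 1%:M).
Qed.

Section Complement.
Variables (e : V) (eX : ~~ (e <= X)%MS).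
Definition ext_basis : 'M[R]_m.*2.+2 := col_mx e X.

Lemma ext_basis_unit : ext_basis \in unitmx.
Proof.
have : (X < e + X)%MS by rewrite ltmxE addsmxSr addsmx_sub negb_and eX.
move/rank_ltmx; rewrite -row_free_unit /row_free X_rank -(addsmxE e X).
by have := rank_leq_col (e + X)%MS; lia.
Qed.

Lemma ext_basis_coords u : u *m X *m invmx ext_basis = row_mx (0 : 'M_1) u.
Proof.
by rewrite -[u *m X]add0r -(mul0mx _ e) -mul_row_col mulmxK ?ext_basis_unit.
Qed.

Lemma ext_decomp Y : exists t u, Y = t *: e + u *m X.
Proof.
set w : 'M[R]_(1, 1 + N) := Y *m invmx ext_basis.
have -> : Y = w *m ext_basis by rewrite mulmxKV // ext_basis_unit.
exists (lsubmx w 0 0), (rsubmx w).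
rewrite -[w](hsubmxK w) /ext_basis mul_row_col row_mxKl row_mxKr.
by rewrite {1}(mx11_scalar (lsubmx w)) mul_scalar_mx.
Qed.

Lemma br_ext_ideal Y : (br Y e <= X)%MS.
Proof.
have [t [u ->]] := ext_decomp Y.
rewrite (brDl hbr) (brZl hbr) (brxx hbr) scaler0 add0r (brC hbr) -scaleN1r.
by rewrite scalemx_sub // X_ideal // submxMl.
Qed.
End Complement.

Lemma br_derived Y1 Y2 : (br Y1 Y2 <= X)%MS.
Proof.
have [e eX] := exists_outside_ideal; have [t [u ->]] := ext_decomp eX Y2.
rewrite (brDr hbr) (brZr hbr) addmx_sub //; first exact: scalemx_sub (br_ext_ideal eX _).
exact: X_ideal (submxMl _ _).
Qed.

Lemma mxtrace_ad Y : \tr (ad_mx br Y) = zeta Y *+ m.+1.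
Proof.
have [e eX] := exists_outside_ideal.
rewrite /ad_mx -[br Y]/(ad hbr Y : _ -> _) (mxtrace_lin1_basis _ (ext_basis_unit eX)).
rewrite -sum_ad_coords_diag -[m.*2.+2]/(1 + N)%N big_split_ord /= big_ord1.
rewrite rowKu (_ : row 0 e = e); last by apply/rowP => j; rewrite mxE.
rewrite -(coordsE (br_ext_ideal eX Y)) ext_basis_coords // row_mxEl mxE add0r.
by apply: eq_bigr => k _; rewrite rowKd -ad_coordsE ext_basis_coords // row_mxEr.
Qed.

Lemma unimodular_zeta : unimodular br -> forall Y, zeta Y = 0.
Proof. by move=> unimod Y; have /eqP := unimod Y; rewrite mxtrace_ad mulrn_eq0 => /eqP. Qed.

Lemma nonunimodular_zeta : ~ unimodular br -> exists Y, zeta Y != 0.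
Proof.
move=> nonunimod; apply: NNPP => zeta0; apply: nonunimod => Y.
rewrite mxtrace_ad; apply/eqP; rewrite mulrn_eq0 /=.
by apply/negPn/negP => zY; apply: zeta0; exists Y.
Qed.

Section Geodesics.
Variables (ip : V -> V -> R) (hip : is_inner_product ip).

Section NonUnimodular.
Variables (Y0 : V) (zY0 : zeta Y0 != 0).

Lemma zeta_eq0_ideal w : zeta w = 0 -> (w <= X)%MS.
Proof.
have Y0X : ~~ (Y0 <= X)%MS by apply: contra zY0 => /coordsE <-; rewrite zeta_ideal.
have [t [u ->]] := ext_decomp Y0X w; rewrite zeta_linear zeta_ideal addr0 => /eqP.
by rewrite mulf_eq0 (negbTE zY0) orbF => /eqP ->; rewrite scale0r add0r submxMl.
Qed.

Lemma center_not_geodesic a : ~ geodesic br ip (a *: z).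
Proof.
case=> az0 /(_ Y0) /eqP; apply/negP.
have a0 : a != 0 by apply: contraNneq az0 => ->; rewrite scale0r.
rewrite (brZl hbr) (brC hbr) br_center scalerN scalerA (ipZl hip) (ipNr hip) (ipZr hip).
by rewrite mulf_neq0 // oppr_eq0 !mulf_neq0 // gt_eqF // (ip_gt0 hip center_neq0).
Qed.

(* bracket with the partner [X_(k +- m)] of [X_k] *)
Lemma geodesic_ideal_orth u (k : 'I_N) : geodesic br ip (u *m X) ->
  (k < m.*2)%N -> u 0 k != 0 -> ip (u *m X) z = 0.
Proof.
case=> _ geo km uk.
have ip_z s : s != 0 -> ip (u *m X) (s *: z) = 0 -> ip (u *m X) z = 0.
  by move=> s0; rewrite (ipZr hip) => /eqP; rewrite mulf_eq0 (negbTE s0) => /eqP.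
have [k_lt_m | m_le_k] := ltnP k m.
  have k'_lt : (k + m < N)%N by lia.
  apply: (ip_z (u 0 k)) => //; rewrite -(geo (row (inord (k + m)) X)) br_mul_row.
  by rewrite (sum_heis_coef_shift _ k_lt_m) ?inordK.
have k'_lt : (k - m < N)%N by lia.
apply: (ip_z (- u 0 k)); first by rewrite oppr_eq0.
have k'E : (inord (k - m) : 'I_N) = (k - m)%N :> nat by rewrite inordK.
rewrite -(geo (row (inord (k - m)) X)) br_mul_row (@sum_heis_coef_unshift _ _ k) //;
  rewrite k'E; lia.
Qed.

Lemma geodesic_orth_center w : geodesic br ip w -> ip w z = 0.
Proof.
move=> geo; have [zw0 | zw] := eqVneq (zeta w) 0; last first.
  have := geo.2 z; rewrite br_center (ipZr hip) => /eqP.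
  by rewrite mulf_eq0 (negbTE zw) => /eqP.
move: geo; rewrite -(coordsE (zeta_eq0_ideal zw0)); set u := coords w => geo.
have [k /andP [km uk] | u0] := pickP [pred k : 'I_N | (k < m.*2)%N && (u 0 k != 0)].
  exact: geodesic_ideal_orth geo km uk.
have uE : u *m X = u 0 ord_max *: z.
  rewrite mulmx_sum_row (bigD1 ord_max) //= big1 ?addr0 // => k kmax.
  have /negbT := u0 k; rewrite negb_and negbK.
  have -> /= : (k < m.*2)%N by move: (ltn_ord k) kmax; rewrite -val_eqE /=; lia.
  by move=> /eqP ->; rewrite scale0r.
by case: (@center_not_geodesic (u 0 ord_max)); rewrite -uE.
Qed.
End NonUnimodular.

Lemma no_geodesic_basis : ~ unimodular br -> ~ exists B, geodesic_basis br ip B.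
Proof.
move=> /nonunimodular_zeta [Y0 zY0] [B [Bfree geoB]].
have uB : B \in unitmx by rewrite -row_free_unit.
have : ip z z = 0.
  rewrite -{1}[z](mulmxKV uB) mulmx_sum_row (ip_suml hip) big1 // => i _.
  by rewrite (ipZl hip) (geodesic_orth_center zY0 (geoB i)) mulr0.
by apply/eqP; rewrite gt_eqF // (ip_gt0 hip center_neq0).
Qed.

Section Unimodular.
Hypothesis unimod : unimodular br.

Lemma center_central Y : br Y z = 0.
Proof. by rewrite br_center unimodular_zeta // scale0r. Qed.

Section OrthComplement.
Variable e : V.
Hypotheses (ee : ip e e = 1) (eX : forall v, (v <= X)%MS -> ip e v = 0).

Lemma orth_ideal_outside : ~~ (e <= X)%MS.
Proof. by apply/negP => /eX e0; move: ee; rewrite e0 => /eqP; rewrite eq_sym oner_eq0. Qed.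

Lemma orth_ideal_geodesic Y : ip e (br e Y) = 0.
Proof. exact/eX/br_derived. Qed.

Lemma ideal_orth_center_geodesic g : (g <= X :&: orthmx ip z)%MS ->
  ip g (br g e) = 0 -> forall Y, ip g (br g Y) = 0.
Proof.
rewrite sub_capmx => /andP [gX gz] ge Y.
have [t [u ->]] := ext_decomp orth_ideal_outside Y.
have [s gu] := br_ideal_center (coords g) u; rewrite coordsE // in gu.
rewrite (brDr hbr) (brZr hbr) gu (ipDr hip) !(ipZr hip) ge.
by rewrite (orthmx_ip hip gz (submx_refl _)) !mulr0 addr0.
Qed.

Let W := (X :&: orthmx ip z)%MS.
Let basis (g : 'I_m.*2 -> V) := cons_fam e (cons_fam (normalize ip z) g).

Lemma orthonormal_basis g : orthonormal ip g -> (forall k, (g k <= W)%MS) ->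
  orthonormal ip (basis g).
Proof.
move=> og gW; have gX k : (g k <= X)%MS := submx_trans (gW k) (capmxSl _ _).
have gz k : (g k <= orthmx ip z)%MS := submx_trans (gW k) (capmxSr _ _).
have zg k : ip (normalize ip z) (g k) = 0.
  by rewrite (ipZl hip) (ipC hip) (orthmx_ip hip (gz k) (submx_refl _)) mulr0.
have ozg := orthonormal_cons hip (ip_normalize hip center_neq0) zg og.
apply: (orthonormal_cons hip ee) ozg.
move=> k; rewrite /cons_fam; case: (unliftP ord0 k) => [k' _|_]; first exact/eX/gX.
by rewrite (ipZr hip) eX ?row_sub ?mulr0.
Qed.

(* the trace of [ad e] in the basis [e, z, g], whose first two diagonal entries vanish *)
Lemma ideal_orth_center_traceless (g : 'I_m.*2 -> V) :
  orthonormal ip g -> (forall k, (g k <= W)%MS) -> \sum_k ip (g k) (br (g k) e) = 0.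
Proof.
move=> og gW; have := unimod e.
rewrite /ad_mx -[br e]/(ad hbr e : _ -> _).
rewrite (mxtrace_lin1_orthonormal hip _ (orthonormal_rows_fam (orthonormal_basis og gW))) /=.
rewrite !big_ord_recl !rowK /basis !cons_fam0 !cons_famS cons_fam0 (brxx hbr) (ip0l hip) add0r.
rewrite /normalize (brZr hbr) center_central scaler0 (ip0l hip) add0r.
move=> tr0; apply/eqP; rewrite -oppr_eq0 -sumrN; apply/eqP; rewrite -[RHS]tr0.
apply: eq_bigr => k _.
by rewrite rowK !cons_famS (brC hbr) (ipNr hip) opprK (ipC hip).
Qed.
End OrthComplement.

Lemma unimodular_orthonormal_geodesic_basis :
  exists B, geodesic_basis br ip B /\ orthonormal_rows ip B.
Proof.
have rk1 : (1 <= \rank ((1%:M : 'M[R]_m.*2.+2) :&: orthmx ip X))%N.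
  by have := mxrank_cap_orthmx ip (1%:M : 'M[R]_m.*2.+2) X; rewrite mxrank1; lia.
have [e1 [e1T oe1]] := orthonormal_exists hip rk1.
set e := e1 ord0; have ee : ip e e = 1 by rewrite oe1 eqxx.
have eX v : (v <= X)%MS -> ip e v = 0.
  exact: (orthmx_ip hip (submx_trans (e1T ord0) (capmxSr _ _))).
have rkW : (m.*2 <= \rank (X :&: orthmx ip z))%N.
  by have := mxrank_cap_orthmx ip X z; rewrite X_rank; lia.
have [g [gW og]] := orthonormal_exists hip rkW.
have [g' [og' g'W g'e]] := orthonormal_zero_diagonal hip (L := adl hbr e) og gW
  (ideal_orth_center_traceless ee eX og gW).
pose f := cons_fam e (cons_fam (normalize ip z) g'); exists (\matrix_i f i).
apply: (orthonormal_geodesic_basis hip (g := f)).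
  exact: (orthonormal_basis ee eX og' g'W).
move=> i Y; rewrite /f /cons_fam; case: (unliftP ord0 i) => [i' _|_]; last first.
  exact: (orth_ideal_geodesic eX).
case: (unliftP ord0 i') => [k _|_].
  exact: (ideal_orth_center_geodesic ee eX (g'W k) (g'e k)).
by rewrite /normalize (brZl hbr) (brC hbr) center_central oppr0 scaler0 (ip0r hip).
Qed.
End Unimodular.
End Geodesics.
End HeisenbergIdeal.

Theorem theorem1p4 (R : realType) (n m : nat) (hm : (0 < m)%N)
    (br : 'rV[R]_n -> 'rV[R]_n -> 'rV[R]_n) (hbr : is_lie_bracket br)
    (X : 'M[R]_(m.*2.+1, n)) (hX : heisenberg_codim1_ideal br X) :
  (~ unimodular br ->
     forall ip : 'rV[R]_n -> 'rV[R]_n -> R, is_inner_product ip ->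
       ~ exists B : 'M[R]_n, geodesic_basis br ip B)
  /\
  (unimodular br ->
     forall ip : 'rV[R]_n -> 'rV[R]_n -> R, is_inner_product ip ->
       exists B : 'M[R]_n, geodesic_basis br ip B /\ orthonormal_rows ip B).
Proof.
have n_eq : n = m.*2.+2 by case: hX => /eqP rX rk _ _; rewrite -rk rX.
subst n; split => [nonunimod ip hip | unimod ip hip].
- exact (no_geodesic_basis hm hbr hX hip nonunimod).
- exact (unimodular_orthonormal_geodesic_basis hm hbr hX hip unimod).
Qed.
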